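(* Let $X=Y\cup Z$ where $Y\cap Z=\emptyset$, $Z$ is a $\sigma$-compact subspace of $X$ and $Y$ is a closed discrete subset of $X$. If $X$ is absolutely strongly star-Lindelöf and $|Y|<\mathfrak{d}$, then $X$ is selectively strongly star-Menger.
   Context: All spaces are regular. $St(A,\mathcal{U})=\bigcup\{U\in\mathcal{U}:U\cap A\neq\emptyset\}$. $\mathfrak{d}$ is the dominating number. $X$ is absolutely strongly star-Lindelöf if for every open cover $\mathcal{U}$ and every dense $D\subseteq X$ there is a countable $C\subseteq D$ with $St(C,\mathcal{U})=X$. $X$ is selectively strongly star-Menger if for every sequence $(\mathcal{U}_n:n\in\omega)$ of open covers and every sequence $(D_n:n\in\omega)$ of dense subsets there are finite $F_n\subseteq D_n$ with $\{St(F_n,\mathcal{U}_n):n\in\omega\}$ covering $X$. *)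

From HB Require Import structures.
From mathcomp Require Import all_boot all_order all_algebra.
From mathcomp Require Import all_classical all_reals all_analysis.
Set Implicit Arguments. Unset Strict Implicit. Unset Printing Implicit Defensive.
Local Open Scope classical_set_scope.
Local Open Scope card_scope.

Section Defs.
Variable T : topologicalType.

Definition open_cover (U : set (set T)) : Prop :=
  (forall V, U V -> open V) /\ \bigcup_(V in U) V = setT.

Definition star (A : set T) (U : set (set T)) : set T :=
  \bigcup_(V in [set V | U V /\ V `&` A !=set0]) V.

Definition absolutely_strongly_star_Lindelof : Prop :=
  forall (U : set (set T)) (D : set T), open_cover U -> dense D ->
    exists C : set T, C `<=` D /\ countable C /\ star C U = setT.

Definition selectively_strongly_star_Menger : Prop :=
  forall (U : nat -> set (set T)) (D : nat -> set T),
    (forall n, open_cover (U n)) -> (forall n, dense (D n)) ->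
    exists F : nat -> set T,
      (forall n, F n `<=` D n /\ finite_set (F n)) /\
      \bigcup_n star (F n) (U n) = setT.

Definition sigma_compact (Z : set T) : Prop :=
  exists K : nat -> set T, (forall n, compact (K n)) /\ Z = \bigcup_n K n.

Definition discrete_subset (Y : set T) : Prop :=
  forall y, Y y -> exists V : set T, open V /\ V `&` Y = [set y].
End Defs.

Definition dominated_by (g f : nat -> nat) : Prop :=
  exists N, forall n, (N <= n)%N -> (g n <= f n)%N.

Definition dominating_family (F : set (nat -> nat)) : Prop :=
  forall g, exists2 f, F f & dominated_by g f.

(* |A| < d, where d is the least cardinality of a dominating family:
   no dominating family has cardinality <= |A| *)
Definition card_lt_dominating {T} (A : set T) : Prop :=
  forall F : set (nat -> nat), dominating_family F -> ~ (F #<= A).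

From HB Require Import structures.
From mathcomp Require Import all_boot all_order all_algebra.
From mathcomp Require Import finmap all_classical all_reals all_analysis.
Local Open Scope classical_set_scope.

(* Proof idea.  Given open covers U_n and
   dense sets D_n, absolute strong star-Lindelofness gives countable
   C_n <= D_n with St(C_n, U_n) = X.  Enumerate C_n injectively by idx_n and
   write C_n|m for the finite "initial segment" {c in C_n | idx_n c <= m}.
   - Z = U_n K_n with K_n compact, and the stars St({c}, U_n), c in C_n, form
     an open cover of K_n; hence K_n <= St(E_n, U_n) for a finite E_n <= C_n.
   - Each y in Y lies in St(C_n|m, U_n) for some m = g_y(n).  Since |Y| < d,
     the family {g_y : y in Y} is not dominating: some h escapes all of them,
     i.e. every y in Y has an n with g_y(n) < h(n), so y is in St(C_n|h(n), U_n).
   Then F_n := E_n u C_n|h(n) are finite subsets of D_n whose stars cover X. *)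

(* The library proves [compact = cover_compact] only for pointed spaces; an
   empty set is trivially cover-compact, and otherwise any of its points
   turns the space into a pointed one. *)
Section PointedCompactCover.
Variables (T : topologicalType) (x0 : T).
Definition pointed_at : Type := T.
HB.instance Definition _ := Topological.on pointed_at.
HB.instance Definition _ := isPointed.Build pointed_at x0.

Lemma compact_cover_pointed (A : set T) : compact A -> cover_compact A.
Proof. by move=> cA; have : @cover_compact pointed_at A by rewrite -compact_cover. Qed.
End PointedCompactCover.

Lemma compact_cover_compact {T : topologicalType} {A : set T} :
  compact A -> cover_compact A.
Proof.
have [[x0 _]|A0] := pselect (A !=set0); first exact: compact_cover_pointed.
move=> _ I D f _ _; exists fset0%fset => // x Ax.
by case: A0; exists x.
Qed.

Section Stars.
Context {T : topologicalType}.
Implicit Types (A B C : set T) (U : set (set T)).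

Lemma star_mono {A B U} : A `<=` B -> star A U `<=` star B U.
Proof.
move=> AB x [V [UV [z [Vz Az]]] Vx]; exists V => //; split => //.
by exists z; split => //; apply: AB.
Qed.

Lemma star_open A U : (forall V, U V -> open V) -> open (star A U).
Proof. by move=> Uo; apply: bigcup_open => V [/Uo]. Qed.

Lemma star_point A U x : star A U x -> exists2 c, A c & star [set c] U x.
Proof.
move=> [V [UV [z [Vz Az]]] Vx]; exists z => //.
by exists V => //; split => //; exists z.
Qed.

Lemma compact_in_finite_star K C U :
  compact K -> (forall V, U V -> open V) -> star C U = setT ->
  exists E, [/\ E `<=` C, finite_set E & K `<=` star E U].
Proof.
move=> cK Uo CU.
have stars_open c : C c -> open (star [set c] U) by move=> _; exact: star_open.
have stars_cover : K `<=` cover C (fun c => star [set c] U).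
  move=> x _; have /star_point[c Cc xc] : star C U x by rewrite CU.
  by exists c.
have [E EC KE] := compact_cover_compact cK _ _ _ stars_open stars_cover.
exists [set` E]; split; first by move=> c /EC; rewrite inE.
  exact: finite_fset.
by move=> x /KE[c Ec xc]; apply: star_mono xc => _ ->.
Qed.

Definition initial_segment (idx : T -> nat) C (m : nat) : set T :=
  [set c | C c /\ (idx c <= m)%N].

Lemma initial_segment_sub idx C m : initial_segment idx C m `<=` C.
Proof. by move=> c []. Qed.

Lemma initial_segment_mono {idx C m k} :
  (m <= k)%N -> initial_segment idx C m `<=` initial_segment idx C k.
Proof. by move=> mk c [Cc cm]; split => //; apply: leq_trans cm mk. Qed.

Lemma initial_segment_finite idx C m :
  {in C &, injective idx} -> finite_set (initial_segment idx C m).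
Proof.
move=> inj; apply/finite_set_leP; exists m.+1.
apply/pcard_leP; apply/injfunPex; exists idx.
  by move=> c [_ cm] /=; rewrite /= ltnS.
by move=> c d; rewrite !inE => -[Cc _] [Cd _]; apply: inj; rewrite inE.
Qed.

Lemma star_initial_segment idx C U x :
  star C U x -> exists m, star (initial_segment idx C m) U x.
Proof.
case/star_point => c Cc xc; exists (idx c).
by apply: star_mono xc => _ ->; split.
Qed.
End Stars.

Lemma escape_small_family {I : Type} {A : set I} (g : I -> nat -> nat) :
  card_lt_dominating A -> exists h, forall i, A i -> exists n, (g i n < h n)%N.
Proof.
move=> Ad; have /existsNP[h nh] : ~ dominating_family (g @` A).
  by move=> dom; apply: (Ad _ dom); apply: card_image_le.
exists h => i Ai; apply/not_existsP => lee; apply: nh.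
by exists (g i); [exists i|exists 0%N => n _; rewrite leqNgt; apply/negP/lee].
Qed.

Theorem mainTheorem6 (T : topologicalType) (Y Z : set T) :
  regular_space T ->
  Y `|` Z = setT -> Y `&` Z = set0 ->
  sigma_compact Z ->
  closed Y -> discrete_subset Y ->
  absolutely_strongly_star_Lindelof T ->
  card_lt_dominating Y ->
  selectively_strongly_star_Menger T.
Proof.
move=> _ YZ _ [K [Kc ZK]] _ _ assl Yd U D Uc Dd.
have /choice[C HC] n : exists C, [/\ C `<=` D n, countable C & star C (U n) = setT].
  by have [C [CD [Cc CU]]] := assl _ _ (Uc n) (Dd n); exists C.
have /choice[idx idx_inj] n : exists idx : T -> nat, {in C n &, injective idx}.
  by apply/countable_injP; case: (HC n).
have /choice[E HE] n : exists E,
    [/\ E `<=` C n, finite_set E & K n `<=` star E (U n)].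
  by case: (HC n) => _ _ CU; apply: compact_in_finite_star (Uc n).1 CU.
have /choice[g Hg] y : exists g : nat -> nat,
    forall n, star (initial_segment (idx n) (C n) (g n)) (U n) y.
  have /choice[g Hg] n : exists m, star (initial_segment (idx n) (C n) m) (U n) y.
    by case: (HC n) => _ _ CU; apply: star_initial_segment; rewrite CU.
  by exists g.
have [h escape] := escape_small_family g Yd.
exists (fun n => E n `|` initial_segment (idx n) (C n) (h n)); split.
  move=> n; have [CD _ _] := HC n; have [EC Ef _] := HE n; split.
    by move=> x [/EC|/initial_segment_sub]; apply: CD.
  by rewrite finite_setU; split => //; apply: initial_segment_finite.
apply/seteqP; split => // x _; have : (Y `|` Z) x by rewrite YZ.
case=> [/escape[n gh]|].
  exists n => //; apply: star_mono (Hg x n) => c.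
  by move/(initial_segment_mono (ltnW gh)); right.
rewrite ZK => -[n _ Kx]; have [_ _ KE] := HE n.
by exists n => //; apply: star_mono (KE _ Kx); left.
Qed.
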